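(* Let $X$, $Y$ be disjoint sets of cardinality at least two, and let $M\le\mathrm{Sym}(X)$ and $N\le\mathrm{Sym}(Y)$ be nontrivial permutation groups. Then $M\boxtimes N$ is discrete (in the permutation topology of $\mathrm{Sym}(V_Y)$) if and only if $M$ and $N$ are semi-regular.
   Context: A permutation group is semi-regular if every point stabiliser is trivial. A group $G\le\mathrm{Sym}(V)$ is discrete in the permutation topology (pointwise convergence) iff the pointwise stabiliser in $G$ of some finite subset of $V$ is trivial. Let $T$ be the $(|X|,|Y|)$-biregular tree with natural bipartition $VT=V_X\sqcup V_Y$ (vertices in $V_X$ have valency $|X|$, in $V_Y$ valency $|Y|$). $A(v)$, $\overline{A}(v)$ are the sets of arcs with origin, resp. terminus, $v$. A legal colouring is a map $c:AT\to X\cup Y$ restricting to a bijection $A(v)\to X$ for $v\in V_X$, to a bijection $A(v)\to Y$ for $v\in V_Y$, and constant on each $\overline{A}(v)$. $U_c(M,N)$ is the group of $g\in\mathrm{Aut}(T)$ with $gV_X=V_X$ and $c|_{A(gv)}\circ g|_{A(v)}\circ(c|_{A(v)})^{-1}$ in $M$ for $v\in V_X$ and in $N$ for $v\in V_Y$. The box product $M\boxtimes N\le\mathrm{Sym}(V_Y)$ is the group induced on $V_Y$ by $U_c(M,N)$. *)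

From Stdlib Require Import List.
Import ListNotations.
Set Implicit Arguments.

Definition perm_group (X : Type) (M : (X -> X) -> Prop) : Prop :=
  M (fun x => x) /\
  (forall m m', M m -> M m' -> M (fun x => m (m' x))) /\
  (forall m, M m -> exists m', M m' /\
       (forall x, m (m' x) = x) /\ (forall x, m' (m x) = x)).

Definition nontrivial_group (X : Type) (M : (X -> X) -> Prop) : Prop :=
  exists m, M m /\ exists x, m x <> x.

Definition semi_regular (X : Type) (M : (X -> X) -> Prop) : Prop :=
  forall m x, M m -> m x = x -> forall y, m y = y.

(* A group G <= Sym(D) is discrete in the permutation topology iff the
   pointwise stabiliser in G of some finite subset F of D is trivial. *)
Definition discrete_perm_group (D : Type) (G : (D -> D) -> Prop) : Prop :=
  exists F : list D, forall h, G h -> (forall d, In d F -> h d = d) ->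
                                 forall d, h d = d.

(* walk E u l w : u = v0, l = [v1; ...; vn], vn = w, consecutive vertices adjacent *)
Inductive walk (V : Type) (E : V -> V -> Prop) : V -> list V -> V -> Prop :=
| walk_nil v : walk E v [] v
| walk_cons u v l w : E u v -> walk E v l w -> walk E u (v :: l) w.

Fixpoint reduced (V : Type) (s : list V) : Prop :=
  match s with
  | a :: ((_ :: c :: _) as t) => a <> c /\ reduced t
  | _ => True
  end.

Definition is_tree (V : Type) (E : V -> V -> Prop) : Prop :=
  (forall u v, E u v -> E v u) /\
  (forall v, ~ E v v) /\
  inhabited V /\
  (forall u v, exists l, walk E u l v) /\
  (forall v l, walk E v l v -> reduced (v :: l) -> l = []).

(* (|X|,|Y|)-biregular tree with natural bipartition V = V_X (isX) |_| V_Y (~ isX):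
   edges join V_X and V_Y, vertices of V_X have valency |X|, those of V_Y valency |Y|. *)
Definition biregular_tree (X Y V : Type) (E : V -> V -> Prop) (isX : V -> Prop)
  : Prop :=
  is_tree E /\
  (forall u v, E u v -> (isX u <-> ~ isX v)) /\
  (forall v, isX v -> exists f : X -> V,
       (forall x, E v (f x)) /\ (forall x x', f x = f x' -> x = x') /\
       (forall w, E v w -> exists x, f x = w)) /\
  (forall v, ~ isX v -> exists f : Y -> V,
       (forall y, E v (f y)) /\ (forall y y', f y = f y' -> y = y') /\
       (forall w, E v w -> exists y, f y = w)).

(* Arcs are ordered pairs (u,w) with E u w; A(v) = arcs with origin v,
   \bar A(v) = arcs with terminus v. Colours live in the disjoint union X + Y.
   c is a legal colouring: c|A(v) is a bijection onto X (v in V_X), resp. onto Y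
   (v in V_Y), and c is constant on each \bar A(v). *)
Definition legal_colouring (X Y V : Type) (E : V -> V -> Prop) (isX : V -> Prop)
  (c : V -> V -> X + Y) : Prop :=
  (forall v, isX v ->
     (forall w, E v w -> exists x, c v w = inl x) /\
     (forall w w', E v w -> E v w' -> c v w = c v w' -> w = w') /\
     (forall x, exists w, E v w /\ c v w = inl x)) /\
  (forall v, ~ isX v ->
     (forall w, E v w -> exists y, c v w = inr y) /\
     (forall w w', E v w -> E v w' -> c v w = c v w' -> w = w') /\
     (forall y, exists w, E v w /\ c v w = inr y)) /\
  (forall u u' v, E u v -> E u' v -> c u v = c u' v).

Definition tree_aut (V : Type) (E : V -> V -> Prop) (g : V -> V) : Prop :=
  (forall u v, g u = g v -> u = v) /\ (forall v, exists u, g u = v) /\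
  (forall u v, E u v <-> E (g u) (g v)).

(* U_c(M,N): automorphisms g with g V_X = V_X such that the local action
   c|A(gv) o g|A(v) o (c|A(v))^{-1} lies in M (v in V_X), resp. N (v in V_Y). *)
Definition U_c (X Y V : Type) (E : V -> V -> Prop) (isX : V -> Prop)
  (c : V -> V -> X + Y) (M : (X -> X) -> Prop) (N : (Y -> Y) -> Prop)
  (g : V -> V) : Prop :=
  tree_aut E g /\
  (forall v, isX (g v) <-> isX v) /\
  (forall v, isX v -> exists m, M m /\
     forall w x, E v w -> c v w = inl x -> c (g v) (g w) = inl (m x)) /\
  (forall v, ~ isX v -> exists n, N n /\
     forall w y, E v w -> c v w = inr y -> c (g v) (g w) = inr (n y)).

Definition VY (V : Type) (isX : V -> Prop) : Type := {v : V | ~ isX v}.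

Definition box_product (X Y V : Type) (E : V -> V -> Prop) (isX : V -> Prop)
  (c : V -> V -> X + Y) (M : (X -> X) -> Prop) (N : (Y -> Y) -> Prop)
  (h : VY isX -> VY isX) : Prop :=
  exists g, U_c E isX c M N g /\ forall v : VY isX, proj1_sig (h v) = g (proj1_sig v).

(* If M and N are semi-regular, an element of U_c(M,N) fixing a vertex and one of its
   neighbours fixes all its neighbours; so the stabiliser of two Y-neighbours of an
   X-vertex v fixes v and then, spreading along the tree, everything.
   Conversely, let m in M fix a colour x0 but move x1, and let F be finite.  Rerooting
   deep enough, there is an X-vertex r such that every point of F is r or lies in a
   branch at r whose colour m fixes.  The automorphism fixing r that acts by m around r
   and around every X-vertex of the branches whose colour m moves, and trivially
   elsewhere, lies in U_c(M,N), fixes F and is nontrivial.  For N, exchange the roles of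
   X and Y. *)

From Stdlib Require Import List Lia Classical ClassicalEpsilon ProofIrrelevance.
Import ListNotations.
Set Implicit Arguments.

Lemma last_cons (A : Type) (x : A) l d : last (x :: l) d = last l x.
Proof.
  revert x d; induction l as [|y l IH]; intros x d; [reflexivity|].
  change (last (y :: l) d = last (y :: l) x). now rewrite !IH.
Qed.

Lemma hd_snoc (A : Type) (l : list A) d : hd d (l ++ [d]) = hd d l.
Proof. now destruct l. Qed.

Lemma reduced_cons (A : Type) (a : A) l : reduced (a :: l) <->
  reduced l /\ (match l with _ :: c :: _ => a <> c | _ => True end).
Proof. destruct l as [|b [|c l]]; simpl; tauto. Qed.

Lemma reduced_glue (A : Type) (s : list A) x y t :
  reduced (s ++ [x; y]) -> reduced (x :: y :: t) -> reduced (s ++ x :: y :: t).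
Proof.
  induction s as [|a s IH]; intros H1 H2; [exact H2|].
  rewrite <- !app_comm_cons, reduced_cons in *. destruct H1 as [H1 H3]. split; auto.
  destruct s as [|b [|c s]]; simpl in *; auto.
Qed.

Lemma reduced_app_r (A : Type) (s t : list A) : reduced (s ++ t) -> reduced t.
Proof.
  induction s as [|a s IH]; [auto|]. rewrite <- app_comm_cons, reduced_cons. tauto.
Qed.

Lemma reduced_app_l (A : Type) (s t : list A) : reduced (s ++ t) -> reduced s.
Proof.
  induction s as [|a s IH]; [simpl; auto|]. rewrite <- app_comm_cons, !reduced_cons.
  intros [H1 H2]; split; auto. destruct s as [|b [|c s]]; simpl in *; auto.
Qed.

Lemma reduced_rev (A : Type) (l : list A) : reduced l -> reduced (rev l).
Proof.
  induction l as [|a l IH]; [simpl; auto|].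
  rewrite reduced_cons. intros [Hl Hac]. specialize (IH Hl).
  destruct l as [|b [|c l]]; [simpl; auto|simpl; auto|].
  change (rev (a :: b :: c :: l)) with (((rev l ++ [c]) ++ [b]) ++ [a]).
  change (rev (b :: c :: l)) with ((rev l ++ [c]) ++ [b]) in IH.
  rewrite <- !app_assoc in *; simpl in *.
  apply reduced_glue; auto. simpl. split; auto.
Qed.

Definition map_inl (X Y : Type) (t : X -> X) (z : X + Y) : X + Y :=
  match z with inl x => inl (t x) | inr y => inr y end.

Lemma map_inl_inj (X Y : Type) (t : X -> X) (z1 z2 : X + Y) :
  (forall a b, t a = t b -> a = b) -> map_inl t z1 = map_inl t z2 -> z1 = z2.
Proof. intros Ht; destruct z1, z2; simpl; intros H; inversion H; f_equal; auto. Qed.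

Lemma map_inl_id (X Y : Type) (z : X + Y) : map_inl (fun x => x) z = z.
Proof. now destruct z. Qed.

Section Tree.
Variables (V : Type) (E : V -> V -> Prop).

Lemma walk_app a l b l' c : walk E a l b -> walk E b l' c -> walk E a (l ++ l') c.
Proof. intros H; induction H; simpl; intros; auto. econstructor; eauto. Qed.

Lemma walk_last a l b : walk E a l b -> last l a = b.
Proof. intros H; induction H; [reflexivity|]. rewrite last_cons; auto. Qed.

Lemma walk_split l l' a b : walk E a (l ++ l') b ->
  walk E a l (last l a) /\ walk E (last l a) l' b.
Proof.
  revert a; induction l as [|x l IH]; intros a H.
  - split; [constructor | exact H].
  - inversion H as [|? ? ? ? Hax Hw]; subst. destruct (IH _ Hw) as [H1 H2].
    rewrite last_cons. split; auto. econstructor; eauto.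
Qed.

Hypothesis E_sym : forall u v, E u v -> E v u.

Lemma walk_rev a l b : walk E a l b -> exists k, rev (a :: l) = b :: k /\ walk E b k a.
Proof.
  intros H; induction H as [v|u v l w Huv _ [k [Hk Wk]]].
  - exists []; split; [reflexivity | constructor].
  - exists (k ++ [u]). split.
    + change (rev (u :: v :: l)) with (rev (v :: l) ++ [u]). now rewrite Hk.
    + apply walk_app with v; auto. econstructor; eauto. constructor.
Qed.

Hypothesis E_acyclic : forall v l, walk E v l v -> reduced (v :: l) -> l = [].

Definition geodesic a l b := walk E a l b /\ reduced (a :: l).

(* Two different geodesics from [a] to [b] would glue, after reversing one, into a
   closed non-backtracking walk. *)
Lemma geodesic_unique l : forall a l' b, geodesic a l b -> geodesic a l' b -> l = l'.
Proof.
  induction l as [|x l IH]; intros a l' b [W R] [W' R'].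
  - inversion W; subst. symmetry; eapply E_acyclic; eauto.
  - destruct l' as [|x' l'].
    + inversion W'; subst. discriminate (E_acyclic W R).
    + inversion W; subst. inversion W'; subst.
      destruct (classic (x = x')) as [<-|Hx].
      * f_equal. apply IH with x b; split; auto;
          [apply reduced_cons in R | apply reduced_cons in R']; tauto.
      * exfalso. destruct (walk_rev W) as [k [Hk Wk]].
        assert (Wc : walk E b (k ++ x' :: l') b) by (eapply walk_app; eauto).
        assert (Rc : reduced (b :: k ++ x' :: l')).
        { change (b :: k ++ x' :: l') with ((b :: k) ++ x' :: l'). rewrite <- Hk.
          assert (Hr : rev (a :: x :: l) = rev l ++ [x; a])
            by (simpl; rewrite <- app_assoc; reflexivity).
          rewrite Hr, <- app_assoc. apply reduced_glue.
          - rewrite <- Hr. now apply reduced_rev.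
          - rewrite reduced_cons. split; auto. }
        destruct k; discriminate (E_acyclic Wc Rc).
Qed.

Lemma geodesic_of_walk a l b : walk E a l b -> exists l', geodesic a l' b.
Proof.
  intros H; induction H as [v|u v l w Huv _ [l' [W R]]].
  - exists []; split; [constructor | simpl; auto].
  - destruct l' as [|y l''].
    + inversion W; subst. exists [w]; split; [econstructor; eauto; constructor | simpl; auto].
    + destruct (classic (y = u)) as [->|Hy].
      * inversion W; subst. exists l''. split; auto. apply reduced_cons in R; tauto.
      * exists (v :: y :: l''). split; [econstructor; eauto|].
        rewrite reduced_cons. split; auto.
Qed.

Lemma common_neighbour_unique b1 b2 a a' :
  b1 <> b2 -> E b1 a -> E a b2 -> E b1 a' -> E a' b2 -> a = a'.
Proof.
  intros Hb H1 H2 H3 H4. apply NNPP. intros Ha.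
  assert (W : walk E b1 [a; b2; a'; b1] b1) by (repeat (econstructor; eauto)).
  assert (R : reduced (b1 :: [a; b2; a'; b1])) by (simpl; repeat split; auto).
  discriminate (E_acyclic W R).
Qed.

Hypothesis E_conn : forall u v, exists l, walk E u l v.

Definition geod (r d : V) : list V := epsilon (inhabits nil) (fun l => geodesic r l d).

Lemma geod_spec r d : geodesic r (geod r d) d.
Proof.
  unfold geod. apply epsilon_spec. destruct (E_conn r d) as [l W]. eapply geodesic_of_walk; eauto.
Qed.

Lemma geod_eq r l d : geodesic r l d -> geod r d = l.
Proof. intros H. eapply geodesic_unique; eauto. apply geod_spec. Qed.

Lemma geod_root r : geod r r = [].
Proof. apply geod_eq. split; [constructor | simpl; auto]. Qed.

Lemma geod_last r d : last (geod r d) r = d.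
Proof. apply walk_last, geod_spec. Qed.

Lemma geod_nil r d : geod r d = [] -> d = r.
Proof. intros H. rewrite <- (geod_last r d), H. reflexivity. Qed.

Lemma geod_snoc r p : exists s, r :: geod r p = s ++ [p].
Proof.
  exists (removelast (r :: geod r p)).
  rewrite (@app_removelast_last _ (r :: geod r p) r) at 1 by discriminate.
  now rewrite last_cons, geod_last.
Qed.

Definition parent r p d := geod r d = geod r p ++ [d].

Lemma parent_edge r p d : parent r p d -> E p d.
Proof.
  unfold parent; intros H. destruct (geod_spec r d) as [W _]. rewrite H in W.
  apply walk_split in W. destruct W as [_ W]. rewrite geod_last in W.
  now inversion W.
Qed.

Lemma parent_neq_root r p d : parent r p d -> d <> r.
Proof.
  unfold parent; intros H ->. rewrite geod_root in H. destruct (geod r p); discriminate.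
Qed.

Lemma parent_depth r p d : parent r p d -> length (geod r p) < length (geod r d).
Proof. unfold parent; intros ->; rewrite length_app; simpl; lia. Qed.

Lemma parent_root r d : E r d -> parent r r d.
Proof.
  intros H. unfold parent. rewrite geod_root. apply geod_eq.
  split; [econstructor; eauto; constructor | simpl; auto].
Qed.

Lemma parent_exists r d : d <> r -> exists p, parent r p d.
Proof.
  intros Hd. destruct (geod r d) as [|x l] eqn:Hl; [now apply geod_nil in Hl|].
  destruct (@exists_last _ (x :: l)) as [l0 [y Hy]]; [discriminate|].
  destruct (geod_spec r d) as [W R]. rewrite Hl, Hy in W, R.
  apply walk_split in W. destruct W as [W1 W2].
  inversion W2 as [|? ? ? ? _ W3]; subst. inversion W3; subst.
  exists (last l0 r). unfold parent. rewrite Hl, Hy. f_equal. symmetry. apply geod_eq.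
  split; auto. change (r :: l0 ++ [d]) with ((r :: l0) ++ [d]) in R.
  eapply reduced_app_l; eauto.
Qed.

Lemma parent_extend r pp p d : parent r pp p -> E p d -> d <> pp -> parent r p d.
Proof.
  intros Hp He Hd. unfold parent. apply geod_eq. split.
  - apply walk_app with p; [apply geod_spec|]. econstructor; eauto; constructor.
  - destruct (geod_spec r p) as [_ R]. unfold parent in Hp. rewrite Hp in *.
    destruct (geod_snoc r pp) as [s Hs].
    change (r :: (geod r pp ++ [p]) ++ [d]) with (((r :: geod r pp) ++ [p]) ++ [d]).
    change (r :: geod r pp ++ [p]) with ((r :: geod r pp) ++ [p]) in R.
    rewrite Hs in *. rewrite <- !app_assoc in *. simpl in *.
    apply reduced_glue; simpl; auto.
Qed.

Lemma grandparent_neq r pp p d : parent r pp p -> parent r p d -> d <> pp.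
Proof.
  intros H1 H2 ->. destruct (geod_spec r pp) as [_ R]. unfold parent in *.
  rewrite H2, H1 in R. destruct (geod_snoc r pp) as [s Hs].
  change (r :: (geod r pp ++ [p]) ++ [pp]) with (((r :: geod r pp) ++ [p]) ++ [pp]) in R.
  rewrite Hs, <- !app_assoc in R. apply reduced_app_r in R. simpl in R. tauto.
Qed.

Lemma edge_parent r a b : E a b -> parent r a b \/ parent r b a.
Proof.
  intros H. destruct (classic (a = r)) as [->|Ha]; [left; now apply parent_root|].
  destruct (parent_exists Ha) as [pa Hpa].
  destruct (classic (b = pa)) as [->|Hb]; [now right | left; eapply parent_extend; eauto].
Qed.

Definition ancestor r a b := exists e, geod r b = geod r a ++ e.

Lemma ancestor_refl r a : ancestor r a a.
Proof. exists []; now rewrite app_nil_r. Qed.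

Lemma ancestor_trans r a b c : ancestor r a b -> ancestor r b c -> ancestor r a c.
Proof. intros [e1 H1] [e2 H2]. exists (e1 ++ e2). now rewrite H2, H1, app_assoc. Qed.

Lemma parent_ancestor r a b : parent r a b -> ancestor r a b.
Proof. intros H; now exists [b]. Qed.

Lemma ancestor_of_walk r t l : forall a b,
  parent r a b -> walk E b l t -> reduced (a :: b :: l) -> ancestor r b t.
Proof.
  induction l as [|x l IH]; intros a b Hp W R.
  - inversion W; subst. apply ancestor_refl.
  - inversion W; subst. apply reduced_cons in R. destruct R as [R Hax].
    assert (Hbx : parent r b x) by (eapply parent_extend; eauto).
    apply ancestor_trans with x; [now apply parent_ancestor | eauto].
Qed.

Lemma geod_from_child r u v t : parent r u v -> ~ ancestor r v t ->
  exists rest, geod v t = u :: rest.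
Proof.
  intros Hp Hn. destruct (geod_spec v t) as [W R].
  destruct (geod v t) as [|w rest] eqn:Hl.
  - inversion W; subst. destruct Hn. apply ancestor_refl.
  - destruct (classic (w = u)) as [->|Hw]; [eauto|].
    exfalso. inversion W; subst.
    assert (Hvw : parent r v w) by (eapply parent_extend; eauto).
    apply Hn, ancestor_trans with w; [now apply parent_ancestor | eapply ancestor_of_walk; eauto].
Qed.

Lemma depth_ind r (P : V -> Prop) :
  (forall d, (forall d', length (geod r d') < length (geod r d) -> P d') -> P d) ->
  forall d, P d.
Proof.
  intros H. assert (Hn : forall n d, length (geod r d) <= n -> P d).
  { induction n; intros d Hd; apply H; intros d' Hd'; [lia|]. apply IHn; lia. }
  intros d; eapply Hn; eauto.
Qed.


Definition branch r d := hd d (geod r d).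

Lemma branch_child_root r d : parent r r d -> branch r d = d.
Proof. intros H. unfold branch. now rewrite H, geod_root. Qed.

Lemma branch_parent r p d : parent r p d -> p <> r -> branch r d = branch r p.
Proof.
  intros H Hp. unfold branch. rewrite H, hd_snoc.
  destruct (geod r p) eqn:Hl; [now apply geod_nil in Hl | reflexivity].
Qed.

Lemma branch_is_child_root r d : d <> r -> parent r r (branch r d).
Proof.
  intros Hd. unfold branch. destruct (geod_spec r d) as [W _].
  destruct (geod r d) as [|w l] eqn:Hl; [now apply geod_nil in Hl|].
  inversion W; subst. now apply parent_root.
Qed.

Lemma ancestor_depth r a b : ancestor r a b -> length (geod r a) <= length (geod r b).
Proof. intros [e ->]. rewrite length_app. lia. Qed.

Lemma ancestor_branch r a b : ancestor r a b -> a <> r -> branch r b = branch r a.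
Proof.
  intros [e He] Ha. unfold branch. rewrite He.
  destruct (geod r a) eqn:Hl; [now apply geod_nil in Hl | reflexivity].
Qed.

Section Colouring.
Variables (X Y : Type) (isX : V -> Prop) (c : V -> V -> X + Y).
Hypothesis E_bip : forall u w, E u w -> (isX u <-> ~ isX w).
Hypothesis c_legal : legal_colouring E isX c.

Lemma colour_X a w : isX a -> E a w -> exists x, c a w = inl x.
Proof. intros Ha Hw. destruct c_legal as [HX _]. now apply (HX a Ha). Qed.

Lemma colour_Y a w : ~ isX a -> E a w -> exists y, c a w = inr y.
Proof. intros Ha Hw. destruct c_legal as [_ [HY _]]. now apply (HY a Ha). Qed.

Lemma colour_inj a w w' : E a w -> E a w' -> c a w = c a w' -> w = w'.
Proof.
  destruct c_legal as [HX [HY _]].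
  destruct (classic (isX a)) as [Ha|Ha]; [apply (HX a Ha) | apply (HY a Ha)].
Qed.

Lemma colour_surj_X a x : isX a -> exists w, E a w /\ c a w = inl x.
Proof. intros Ha. destruct c_legal as [HX _]. apply (HX a Ha). Qed.

Lemma colour_surj_Y a y : ~ isX a -> exists w, E a w /\ c a w = inr y.
Proof. intros Ha. destruct c_legal as [_ [HY _]]. apply (HY a Ha). Qed.

Lemma colour_in u u' a : E u a -> E u' a -> c u a = c u' a.
Proof. destruct c_legal as [_ [_ HK]]. apply HK. Qed.

Lemma side_of_edges a b a' b' : E a b -> E a' b' -> (isX a <-> isX a') -> (isX b <-> isX b').
Proof.
  intros H1 H2 H3. apply E_bip in H1, H2. destruct (classic (isX b)), (classic (isX b')); tauto.
Qed.

Definition nb_coloured (a : V) (l : X + Y) : V :=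
  epsilon (inhabits a) (fun w => E a w /\ c a w = l).

Lemma nb_coloured_self a b : E a b -> nb_coloured a (c a b) = b.
Proof.
  intros H. destruct (epsilon_spec (inhabits a) (fun w => E a w /\ c a w = c a b))
    as [H1 H2]; [eauto|].
  eapply colour_inj; eauto.
Qed.

Lemma nb_coloured_map (t : X -> X) a b a' : E a b -> (isX a <-> isX a') ->
  E a' (nb_coloured a' (map_inl t (c a b))) /\
  c a' (nb_coloured a' (map_inl t (c a b))) = map_inl t (c a b).
Proof.
  intros H Hs. unfold nb_coloured. apply epsilon_spec. destruct (classic (isX a)) as [Ha|Ha].
  - destruct (colour_X Ha H) as [x ->]. apply colour_surj_X. tauto.
  - destruct (colour_Y Ha H) as [y ->]. apply colour_surj_Y. tauto.
Qed.

Definition edge_image (t : X -> X) p a p' a' :=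
  E p a /\ E p' a' /\ (isX a <-> isX a') /\
  c a' p' = map_inl t (c a p) /\ c p' a' = map_inl t (c p a).

Lemma edge_image_step (t : X -> X) p a p' a' b : (forall x y, t x = t y -> x = y) ->
  edge_image t p a p' a' -> E a b -> b <> p ->
  edge_image t a b a' (nb_coloured a' (map_inl t (c a b))) /\
  nb_coloured a' (map_inl t (c a b)) <> p'.
Proof.
  intros Ht [H1 [H2 [H3 [H4 H5]]]] Hab Hbp.
  destruct (nb_coloured_map t Hab H3) as [S1 S2].
  split.
  - refine (conj Hab (conj S1 (conj _ (conj _ S2)))).
    + eapply side_of_edges; eauto.
    + rewrite (@colour_in _ p' a'), H5; auto. f_equal. apply colour_in; auto.
  - intros Heq. rewrite Heq, H4 in S2. apply map_inl_inj, colour_inj in S2; auto.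
Qed.

Fixpoint follow (t : X -> X) (a' a : V) (l : list V) : list V :=
  match l with
  | [] => []
  | b :: l0 => let b' := nb_coloured a' (map_inl t (c a b)) in b' :: follow t b' b l0
  end.

Lemma follow_snoc t l : forall a' a d, follow t a' a (l ++ [d]) =
  follow t a' a l ++ [nb_coloured (last (follow t a' a l) a') (map_inl t (c (last l a) d))].
Proof.
  induction l as [|b l IH]; intros a' a d; [reflexivity|].
  rewrite <- app_comm_cons. cbn [follow]. now rewrite IH, !last_cons.
Qed.

Section Twist.
Variables (r : V) (m : X -> X).
Hypothesis r_X : isX r.
Hypothesis m_inj : forall x y, m x = m y -> x = y.

Definition fixes_branch (w : V) : Prop := c r w = map_inl m (c r w).

Definition branch_act (w : V) : X -> X :=
  if excluded_middle_informative (fixes_branch w) then (fun x => x) else m.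

(* The image of the geodesic from [r] to [d] is built step by step: the next vertex
   is the neighbour reached by the old arc colour relabelled by [branch_act w], where [w]
   is the branch of [d].  Hence [twist] fixes [r] and acts by [m] around [r] and around
   every X-vertex of the branches whose colour [m] moves. *)
Definition twist_path (l : list V) : list V :=
  match l with
  | [] => []
  | w :: l0 => let w' := nb_coloured r (map_inl (branch_act w) (c r w)) in
               w' :: follow (branch_act w) w' w l0
  end.

Definition twist (d : V) : V := last (twist_path (geod r d)) r.

Lemma branch_act_inj w : forall x y, branch_act w x = branch_act w y -> x = y.
Proof. unfold branch_act; destruct excluded_middle_informative; auto. Qed.

Lemma twist_path_snoc l d : twist_path (l ++ [d]) =
  twist_path l ++ [nb_coloured (last (twist_path l) r)
                     (map_inl (branch_act (hd d l)) (c (last l r) d))].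
Proof.
  destruct l as [|w l]; [reflexivity|].
  rewrite <- app_comm_cons. cbn [twist_path hd].
  now rewrite follow_snoc, <- app_comm_cons, !last_cons.
Qed.

Lemma twist_root : twist r = r.
Proof. unfold twist. now rewrite geod_root. Qed.

Lemma twist_parent p d : parent r p d ->
  twist d = nb_coloured (twist p) (map_inl (branch_act (branch r d)) (c p d)).
Proof.
  intros H. unfold twist, branch. now rewrite H, twist_path_snoc, last_last, hd_snoc, geod_last.
Qed.

Lemma twist_edge_image : forall d p, parent r p d ->
  edge_image (branch_act (branch r d)) p d (twist p) (twist d).
Proof.
  intros d; induction d as [d IH] using (depth_ind r); intros p Hp.
  destruct (classic (p = r)) as [->|Hpr].
  - rewrite (twist_parent Hp), twist_root, (branch_child_root Hp).
    assert (Erd : E r d) by exact (parent_edge Hp).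
    destruct (nb_coloured_map (branch_act d) Erd (iff_refl (isX r))) as [S1 S2].
    refine (conj Erd (conj S1 (conj _ (conj _ S2)))).
    + eapply side_of_edges; eauto. tauto.
    + assert (Hd : ~ isX d) by (apply (E_bip Erd); auto).
      destruct (colour_Y Hd (E_sym Erd)) as [y Hy]. rewrite Hy. simpl.
      rewrite <- Hy. apply colour_in; auto.
  - destruct (parent_exists Hpr) as [pp Hpp].
    rewrite (twist_parent Hp), (branch_parent Hp Hpr) in *.
    eapply edge_image_step; eauto using branch_act_inj, parent_edge, grandparent_neq.
    exact (IH p (parent_depth Hp) pp Hpp).
Qed.

Lemma twist_grandparent_neq pp p d : parent r pp p -> parent r p d -> twist d <> twist pp.
Proof.
  intros H1 H2. assert (Hpr : p <> r) by exact (parent_neq_root H1).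
  rewrite (twist_parent H2), (branch_parent H2 Hpr).
  eapply edge_image_step; eauto using branch_act_inj, twist_edge_image, parent_edge,
    grandparent_neq.
Qed.

Lemma twist_side d : isX (twist d) <-> isX d.
Proof.
  destruct (classic (d = r)) as [->|Hd]; [rewrite twist_root; tauto|].
  destruct (parent_exists Hd) as [p Hp].
  destruct (twist_edge_image Hp) as [_ [_ [H _]]]. tauto.
Qed.

Lemma twist_edge a b : E a b -> E (twist a) (twist b).
Proof.
  intros H. destruct (edge_parent r H) as [Hp|Hp];
    destruct (twist_edge_image Hp) as [_ [H1 _]]; auto.
Qed.

Lemma parent_twist : forall d p, parent r p d -> parent r (twist p) (twist d).
Proof.
  intros d; induction d as [d IH] using (depth_ind r); intros p Hp.
  destruct (classic (p = r)) as [->|Hpr].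
  - rewrite twist_root. apply parent_root.
    destruct (twist_edge_image Hp) as [_ [H1 _]]. now rewrite twist_root in H1.
  - destruct (parent_exists Hpr) as [pp Hpp].
    apply parent_extend with (twist pp); [exact (IH p (parent_depth Hp) pp Hpp)| |].
    + apply twist_edge, (parent_edge Hp).
    + exact (twist_grandparent_neq Hpp Hp).
Qed.

Lemma branch_twist : forall d, d <> r -> branch r (twist d) = twist (branch r d).
Proof.
  intros d; induction d as [d IH] using (depth_ind r); intros Hd.
  destruct (parent_exists Hd) as [p Hp].
  pose proof (parent_twist Hp) as Hg.
  destruct (classic (p = r)) as [->|Hpr].
  - rewrite twist_root in Hg. now rewrite (branch_child_root Hg), (branch_child_root Hp).
  - destruct (parent_exists Hpr) as [pp Hpp].
    assert (Hgp : twist p <> r) by exact (parent_neq_root (parent_twist Hpp)).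
    rewrite (branch_parent Hg Hgp), (branch_parent Hp Hpr).
    apply IH; auto. now apply parent_depth.
Qed.

Lemma twist_colour_root w : parent r r w -> c r (twist w) = map_inl m (c r w).
Proof.
  intros H. destruct (twist_edge_image H) as [_ [_ [_ [_ H5]]]].
  rewrite twist_root, (branch_child_root H) in H5. rewrite H5.
  unfold branch_act. destruct excluded_middle_informative as [Hf|Hf]; auto.
  now rewrite map_inl_id.
Qed.

Lemma twist_local_X a : isX a -> exists t, (t = (fun x => x) \/ t = m) /\
  forall w x, E a w -> c a w = inl x -> c (twist a) (twist w) = inl (t x).
Proof.
  intros Ha. destruct (classic (a = r)) as [->|Har].
  - exists m. split; auto. intros w x Hw Hx.
    destruct (edge_parent r Hw) as [Hp|Hp].
    + now rewrite twist_root, (twist_colour_root Hp), Hx.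
    + exfalso. exact (parent_neq_root Hp eq_refl).
  - exists (branch_act (branch r a)).
    split; [unfold branch_act; destruct excluded_middle_informative; auto|].
    intros w x Hw Hx. destruct (edge_parent r Hw) as [Hp|Hp].
    + destruct (twist_edge_image Hp) as [_ [_ [_ [_ H5]]]].
      now rewrite H5, (branch_parent Hp Har), Hx.
    + destruct (twist_edge_image Hp) as [_ [_ [_ [H4 _]]]]. now rewrite H4, Hx.
Qed.

Lemma twist_local_Y a : ~ isX a ->
  forall w y, E a w -> c a w = inr y -> c (twist a) (twist w) = inr y.
Proof.
  intros Ha w y Hw Hy. destruct (edge_parent r Hw) as [Hp|Hp].
  - destruct (twist_edge_image Hp) as [_ [_ [_ [_ H5]]]]. now rewrite H5, Hy.
  - destruct (twist_edge_image Hp) as [_ [_ [_ [H4 _]]]]. now rewrite H4, Hy.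
Qed.

Lemma twist_fixes_branch : forall d, d <> r -> fixes_branch (branch r d) -> twist d = d.
Proof.
  intros d; induction d as [d IH] using (depth_ind r); intros Hd Hf.
  destruct (parent_exists Hd) as [p Hp].
  assert (Ht : branch_act (branch r d) = fun x => x).
  { unfold branch_act; destruct excluded_middle_informative; tauto. }
  rewrite (twist_parent Hp), Ht, map_inl_id.
  destruct (classic (p = r)) as [->|Hpr].
  - rewrite twist_root. apply nb_coloured_self, (parent_edge Hp).
  - rewrite (IH p (parent_depth Hp) Hpr); [apply nb_coloured_self, (parent_edge Hp)|].
    now rewrite <- (branch_parent Hp Hpr).
Qed.

Lemma twist_moves w : E r w -> ~ fixes_branch w -> twist w <> w.
Proof.
  intros Hw Hf Heq. apply Hf. pose proof (twist_colour_root (parent_root Hw)) as H.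
  rewrite Heq in H. exact H.
Qed.

End Twist.

Lemma twist_inverse r (f g : X -> X) : isX r ->
  (forall x, g (f x) = x) -> forall d, twist r g (twist r f d) = d.
Proof.
  intros Hr H1.
  assert (Hf : forall a b, f a = f b -> a = b).
  { intros a b Hab. now rewrite <- (H1 a), <- (H1 b), Hab. }
  intros d; induction d as [d IH] using (depth_ind r).
  destruct (classic (d = r)) as [->|Hd]; [now rewrite !twist_root|].
  destruct (parent_exists Hd) as [p Hp].
  rewrite (twist_parent g (parent_twist f Hr Hf Hp)), (IH p (parent_depth Hp)).
  destruct (twist_edge_image f Hr Hf Hp) as [_ [_ [_ [_ ->]]]].
  rewrite (branch_twist f Hr Hf Hd).
  pose proof (branch_is_child_root Hd) as Hw. set (w := branch r d) in *.
  (* [f] fixes the colour of [w] iff [g] fixes that of its image, so the branch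
     actions of [w] and of its image are inverse to each other. *)
  assert (Hcomp : forall z : X + Y,
    map_inl (branch_act r g (twist r f w)) (map_inl (branch_act r f w) z) = z).
  { destruct (colour_X Hr (parent_edge Hw)) as [x Hx].
    unfold branch_act, fixes_branch. rewrite (twist_colour_root f Hr Hf Hw), Hx. simpl.
    destruct excluded_middle_informative as [A|A], excluded_middle_informative as [B|B];
      rewrite ?H1 in A; intros [z|z]; simpl; rewrite ?H1; congruence. }
  rewrite Hcomp. apply nb_coloured_self, (parent_edge Hp).
Qed.

Section Reroot.
Variables (m : X -> X) (x0 x1 : X) (y1 y2 : Y).
Hypothesis m_x0 : m x0 = x0.
Hypothesis x0_x1 : x0 <> x1.
Hypothesis y1_y2 : y1 <> y2.
Hypothesis V_inh : inhabited V.

Definition good_root r F := isX r /\ forall f, In f F -> f = r \/ fixes_branch r m (branch r f).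

Lemma exists_X_vertex : exists r, isX r.
Proof.
  destruct V_inh as [a]. destruct (classic (isX a)) as [Ha|Ha]; eauto.
  destruct (colour_surj_Y y1 Ha) as [w [Hw _]]. exists w. apply E_bip in Hw. tauto.
Qed.

Lemma child_X_coloured r p a x : parent r p a -> isX a -> c a p <> inl x ->
  exists u, parent r a u /\ c a u = inl x.
Proof.
  intros Hp Ha Hx. destruct (colour_surj_X x Ha) as [u [Hu Hcu]].
  exists u. split; auto. apply parent_extend with p; auto. intros ->. auto.
Qed.

Lemma child_of_Y r p a : parent r p a -> ~ isX a -> exists b, parent r a b /\ isX b.
Proof.
  intros Hp Ha. destruct (colour_Y Ha (E_sym (parent_edge Hp))) as [y0 Hy0].
  assert (Hy : exists y, y <> y0).
  { destruct (classic (y1 = y0)) as [->|]; [exists y2 | exists y1]; auto. }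
  destruct Hy as [y Hy]. destruct (colour_surj_Y y Ha) as [b [Hb Hcb]].
  exists b. split.
  - apply parent_extend with p; auto. intros ->. congruence.
  - apply E_bip in Hb. tauto.
Qed.

(* All arcs into a Y-vertex carry the same colour, so an x0-coloured arc from [a] to a
   child [u] stays x0-coloured from any grandchild [v] through [u]. *)
Lemma fixed_edge_below_child r a u : parent r a u -> isX a -> c a u = inl x0 ->
  exists v, parent r u v /\ isX v /\ c v u = inl x0.
Proof.
  intros Hu Ha Hcu.
  assert (Hnu : ~ isX u) by (apply (E_bip (parent_edge Hu)); auto).
  destruct (child_of_Y Hu Hnu) as [v [Hv Hxv]].
  exists v. repeat split; auto. rewrite <- Hcu. apply colour_in; auto.
  - apply E_sym, (parent_edge Hv).
  - apply (parent_edge Hu).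
Qed.

Lemma fixed_edge_below_X r p a : parent r p a -> isX a ->
  exists u v, parent r u v /\ isX v /\ c v u = inl x0 /\ ancestor r a u.
Proof.
  intros Hp Ha. destruct (classic (c a p = inl x0)) as [Hcp|Hcp].
  - destruct (@child_X_coloured r p a x1 Hp Ha) as [b [Hb Hcb]]; [congruence|].
    destruct (child_of_Y Hb (proj1 (E_bip (parent_edge Hb)) Ha)) as [a2 [Ha2 Hxa2]].
    destruct (@child_X_coloured r b a2 x0 Ha2 Hxa2) as [u [Hu Hcu]].
    { rewrite (colour_in (E_sym (parent_edge Ha2)) (parent_edge Hb)), Hcb. congruence. }
    destruct (fixed_edge_below_child Hu Hxa2 Hcu) as [v [Hv [Hxv Hcv]]].
    exists u, v. repeat split; auto.
    apply ancestor_trans with b; [now apply parent_ancestor|].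
    apply ancestor_trans with a2; now apply parent_ancestor.
  - destruct (child_X_coloured Hp Ha Hcp) as [u [Hu Hcu]].
    destruct (fixed_edge_below_child Hu Ha Hcu) as [v [Hv [Hxv Hcv]]].
    exists u, v. repeat split; auto. now apply parent_ancestor.
Qed.

Lemma fixed_edge_below r f : f <> r ->
  exists u v, parent r u v /\ isX v /\ c v u = inl x0 /\ ancestor r f u.
Proof.
  intros Hf. destruct (parent_exists Hf) as [p Hp].
  destruct (classic (isX f)) as [Hx|Hx]; [eapply fixed_edge_below_X; eauto|].
  destruct (child_of_Y Hp Hx) as [a [Ha Hxa]].
  destruct (fixed_edge_below_X Ha Hxa) as [u [v [H1 [H2 [H3 H4]]]]].
  exists u, v. repeat split; auto. apply ancestor_trans with a; auto. now apply parent_ancestor.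
Qed.

(* Reroot below [f] at an X-vertex [v] whose edge to its parent [u] has colour [x0]:
   everything seen so far lies in the branch of [v] through [u], which [m] fixes. *)
Lemma good_root_cons r F f : good_root r F -> exists r', good_root r' (f :: F).
Proof.
  intros [Hr HF].
  destruct (classic (f = r \/ fixes_branch r m (branch r f))) as [Hf|Hf].
  { exists r. split; auto. intros t [<-|Ht]; auto. }
  apply not_or_and in Hf as [Hfr Hfb].
  destruct (fixed_edge_below Hfr) as [u [v [Huv [Hv [Hcu Hfu]]]]].
  exists v. split; auto.
  assert (Hbelow : forall t, In t (f :: F) -> ~ ancestor r v t).
  { intros t Ht Hvt. pose proof (parent_depth Huv) as Hd.
    destruct Ht as [<-|Ht].
    - pose proof (ancestor_depth Hvt). pose proof (ancestor_depth Hfu). lia.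
    - destruct (HF t Ht) as [->|Htb].
      + pose proof (ancestor_depth Hvt) as H0. rewrite geod_root in H0. simpl in H0. lia.
      + apply Hfb. rewrite <- (ancestor_branch (ancestor_trans Hfu (ancestor_trans
          (parent_ancestor Huv) Hvt)) Hfr). exact Htb. }
  intros t Ht. right.
  destruct (geod_from_child Huv (Hbelow t Ht)) as [rest Hrest].
  unfold branch, fixes_branch. rewrite Hrest. simpl. rewrite Hcu. simpl. now rewrite m_x0.
Qed.

Lemma good_root_exists F : exists r, good_root r F.
Proof.
  induction F as [|f F [r Hr]].
  - destruct exists_X_vertex as [r Hr]. exists r. split; auto. intros f [].
  - eapply good_root_cons; eauto.
Qed.

End Reroot.

Lemma twist_in_U_c (M : (X -> X) -> Prop) (N : (Y -> Y) -> Prop) m x0 x1 (F : list V) :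
  inhabited V -> (exists y1 y2 : Y, y1 <> y2) -> perm_group M -> perm_group N ->
  M m -> m x0 = x0 -> m x1 <> x1 ->
  exists g, U_c E isX c M N g /\ (forall f, In f F -> g f = f) /\ exists w, g w <> w.
Proof.
  intros V_inh [y1 [y2 Hy]] [M_id [_ M_inv]] [N_id _] Hm Hx0 Hx1.
  destruct (M_inv m Hm) as [mi [_ [Hmmi Hmim]]].
  assert (Hx01 : x0 <> x1) by (intros ->; auto).
  destruct (good_root_exists m Hx0 Hx01 Hy V_inh F) as [r [Hr HF]].
  assert (m_inj : forall a b, m a = m b -> a = b).
  { intros a b Hab. now rewrite <- (Hmim a), <- (Hmim b), Hab. }
  assert (mi_inj : forall a b, mi a = mi b -> a = b).
  { intros a b Hab. now rewrite <- (Hmmi a), <- (Hmmi b), Hab. }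
  pose proof (twist_inverse m mi Hr Hmim) as Hinv.
  exists (twist r m). split; [split; [split; [|split]|split; [|split]]|split].
  - intros a b Hab. now rewrite <- (Hinv a), <- (Hinv b), Hab.
  - intros d. exists (twist r mi d). exact (twist_inverse mi m Hr Hmmi d).
  - intros a b. split; [apply (twist_edge m Hr m_inj)|].
    intros Hab. rewrite <- (Hinv a), <- (Hinv b). exact (twist_edge mi Hr mi_inj Hab).
  - apply (twist_side m Hr m_inj).
  - intros a Ha. destruct (twist_local_X m Hr m_inj Ha) as [t [Ht Hl]].
    exists t. split; [destruct Ht as [->| ->]; auto | exact Hl].
  - intros a Ha. exists (fun y => y). split; [exact N_id|].
    exact (twist_local_Y m Hr m_inj Ha).
  - intros f Hf. destruct (HF f Hf) as [->|Hfb]; [apply twist_root|].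
    destruct (classic (f = r)) as [->|Hfr]; [apply twist_root|].
    exact (twist_fixes_branch Hfr Hfb).
  - destruct (colour_surj_X x1 Hr) as [w [Hw Hcw]]. exists w.
    apply (twist_moves Hr m_inj Hw). unfold fixes_branch. rewrite Hcw. simpl. congruence.
Qed.

End Colouring.
End Tree.

Definition swap_sum (X Y : Type) (z : X + Y) : Y + X :=
  match z with inl x => inr x | inr y => inl y end.

Lemma swap_sum_inj (X Y : Type) (a b : X + Y) : swap_sum a = swap_sum b -> a = b.
Proof. destruct a, b; simpl; intros H; inversion H; auto. Qed.

Lemma legal_colouring_swap (X Y V : Type) (E : V -> V -> Prop) isX (c : V -> V -> X + Y) :
  legal_colouring E isX c ->
  legal_colouring E (fun v => ~ isX v) (fun a b => swap_sum (c a b)).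
Proof.
  intros [HX [HY HK]]. split; [|split].
  - intros v Hv. destruct (HY v Hv) as [A [B C]]. split; [|split].
    + intros w Hw. destruct (A w Hw) as [y ->]. now exists y.
    + intros w w' Hw Hw' Hcc. apply swap_sum_inj in Hcc. eauto.
    + intros y. destruct (C y) as [w [Hw Hcw]]. exists w. now rewrite Hcw.
  - intros v Hv. apply NNPP in Hv. destruct (HX v Hv) as [A [B C]]. split; [|split].
    + intros w Hw. destruct (A w Hw) as [x ->]. now exists x.
    + intros w w' Hw Hw' Hcc. apply swap_sum_inj in Hcc. eauto.
    + intros x. destruct (C x) as [w [Hw Hcw]]. exists w. now rewrite Hcw.
  - intros u u' v H1 H2. f_equal. eauto.
Qed.

Lemma U_c_swap (X Y V : Type) (E : V -> V -> Prop) isX (c : V -> V -> X + Y) M N g :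
  U_c E (fun v => ~ isX v) (fun a b => swap_sum (c a b)) N M g -> U_c E isX c M N g.
Proof.
  intros [Haut [Hside [HlY HlX]]]. split; [exact Haut | split; [|split]].
  - intros v. specialize (Hside v). destruct (classic (isX v)), (classic (isX (g v))); tauto.
  - intros a Ha. destruct (HlX a (fun H => H Ha)) as [m [Hm Hl]]. exists m. split; auto.
    intros w x Hw Hx. pose proof (Hl w x Hw (f_equal (@swap_sum _ _) Hx)) as H.
    destruct (c (g a) (g w)); simpl in H; now inversion H.
  - intros a Ha. destruct (HlY a Ha) as [n [Hn Hl]]. exists n. split; auto.
    intros w y Hw Hy. pose proof (Hl w y Hw (f_equal (@swap_sum _ _) Hy)) as H.
    destruct (c (g a) (g w)); simpl in H; now inversion H.
Qed.

Lemma not_semi_regular (X : Type) (M : (X -> X) -> Prop) : ~ semi_regular M ->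
  exists m x y, M m /\ m x = x /\ m y <> y.
Proof.
  intros H. apply not_all_ex_not in H as [m H]. apply not_all_ex_not in H as [x H].
  apply imply_to_and in H as [Hm H]. apply imply_to_and in H as [Hxx H].
  apply not_all_ex_not in H as [y H]. now exists m, x, y.
Qed.

Section BoxProduct.
Variables (X Y V : Type) (E : V -> V -> Prop) (isX : V -> Prop) (c : V -> V -> X + Y).
Variables (M : (X -> X) -> Prop) (N : (Y -> Y) -> Prop).
Hypothesis E_sym : forall u v, E u v -> E v u.
Hypothesis E_acyclic : forall v l, walk E v l v -> reduced (v :: l) -> l = [].
Hypothesis E_conn : forall u v, exists l, walk E u l v.
Hypothesis E_bip : forall u w, E u w -> (isX u <-> ~ isX w).
Hypothesis c_legal : legal_colouring E isX c.
Hypothesis V_inh : inhabited V.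
Hypothesis X_two : exists x1 x2 : X, x1 <> x2.
Hypothesis Y_two : exists y1 y2 : Y, y1 <> y2.
Hypothesis M_group : perm_group M.
Hypothesis N_group : perm_group N.

Lemma VY_eq (d1 d2 : VY isX) : proj1_sig d1 = proj1_sig d2 -> d1 = d2.
Proof. destruct d1, d2; simpl; intros ->; f_equal; apply proof_irrelevance. Qed.

(* An X-vertex is the unique common neighbour of any two of its neighbours. *)
Lemma fixed_by_Y_vertices (g : V -> V) : (forall a b, E a b -> E (g a) (g b)) ->
  (forall w, ~ isX w -> g w = w) -> forall a, g a = a.
Proof.
  intros Hg Hw a. destruct (classic (isX a)) as [Ha|Ha]; [|auto].
  destruct X_two as [x1 [x2 Hx]].
  destruct (colour_surj_X c_legal a x1 Ha) as [b1 [H1 C1]].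
  destruct (colour_surj_X c_legal a x2 Ha) as [b2 [H2 C2]].
  assert (Hb : b1 <> b2) by (intros ->; congruence).
  assert (F1 : g b1 = b1) by (apply Hw, (E_bip H1), Ha).
  assert (F2 : g b2 = b2) by (apply Hw, (E_bip H2), Ha).
  symmetry. apply (common_neighbour_unique E_sym E_acyclic _ _ Hb (E_sym H1) H2).
  - rewrite <- F1. now apply Hg, E_sym.
  - rewrite <- F2. now apply Hg.
Qed.

Lemma discrete_U_c : discrete_perm_group (@box_product X Y V E isX c M N) ->
  exists F : list V, forall g, U_c E isX c M N g -> (forall f, In f F -> g f = f) ->
  forall a, g a = a.
Proof.
  intros [Fd HD]. exists (map (@proj1_sig _ _) Fd). intros g Hg Hfix.
  pose proof Hg as [[_ [_ Hedge]] [Hside _]].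
  pose (h := fun d : VY isX => exist (fun v => ~ isX v) (g (proj1_sig d))
     (fun H => proj2_sig d (proj1 (Hside _) H))).
  assert (Hh : forall d, h d = d).
  { apply HD; [now exists g|]. intros d Hd. apply VY_eq, Hfix, in_map, Hd. }
  apply fixed_by_Y_vertices; [intros a b; apply Hedge|].
  intros w Hw. exact (f_equal (@proj1_sig _ _) (Hh (exist _ w Hw))).
Qed.

(* Semi-regularity of the local action at [a] turns one fixed neighbour into all. *)
Lemma U_c_fixes_neighbours g : U_c E isX c M N g -> semi_regular M -> semi_regular N ->
  forall a b, g a = a -> E a b -> g b = b -> forall w, E a w -> g w = w.
Proof.
  intros [[_ [_ Hedge]] [_ [HlX HlY]]] SM SN a b Ha Hab Hb w Hw.
  assert (Ew : E a (g w)) by (rewrite <- Ha at 1; exact (proj1 (Hedge a w) Hw)).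
  destruct (classic (isX a)) as [HXa|HXa].
  - destruct (HlX a HXa) as [m [Hm Hl]].
    destruct (colour_X c_legal _ _ HXa Hab) as [xb Hxb].
    destruct (colour_X c_legal _ _ HXa Hw) as [xw Hxw].
    pose proof (Hl b xb Hab Hxb) as Hb'. rewrite Ha, Hb, Hxb in Hb'. inversion Hb' as [Hfx].
    pose proof (Hl w xw Hw Hxw) as Hw'. rewrite Ha, (SM m xb Hm (eq_sym Hfx) xw) in Hw'.
    apply (colour_inj c_legal _ _ _ Ew Hw). congruence.
  - destruct (HlY a HXa) as [n [Hn Hl]].
    destruct (colour_Y c_legal _ _ HXa Hab) as [yb Hyb].
    destruct (colour_Y c_legal _ _ HXa Hw) as [yw Hyw].
    pose proof (Hl b yb Hab Hyb) as Hb'. rewrite Ha, Hb, Hyb in Hb'. inversion Hb' as [Hfy].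
    pose proof (Hl w yw Hw Hyw) as Hw'. rewrite Ha, (SN n yb Hn (eq_sym Hfy) yw) in Hw'.
    apply (colour_inj c_legal _ _ _ Ew Hw). congruence.
Qed.

Lemma U_c_fixes_all g : U_c E isX c M N g -> semi_regular M -> semi_regular N ->
  forall a b, g a = a -> E a b -> g b = b -> forall d, g d = d.
Proof.
  intros Hg SM SN a b Ha Hab Hb d. destruct (E_conn a d) as [l W]. revert b Hab Hb Ha.
  induction W as [a|a a' l d Haa' _ IH]; intros b Hab Hb Ha; [exact Ha|].
  apply (IH a); auto.
  exact (U_c_fixes_neighbours Hg SM SN Ha Hab Hb Haa').
Qed.

(* The stabiliser of two Y-neighbours of an X-vertex [v] fixes [v], hence everything. *)
Lemma semi_regular_discrete : semi_regular M -> semi_regular N ->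
  discrete_perm_group (@box_product X Y V E isX c M N).
Proof.
  intros SM SN. destruct X_two as [x1 [x2 Hx]]. destruct Y_two as [y1 _].
  destruct (exists_X_vertex E_bip c_legal y1 V_inh) as [v Hv].
  destruct (colour_surj_X c_legal v x1 Hv) as [w1 [H1 C1]].
  destruct (colour_surj_X c_legal v x2 Hv) as [w2 [H2 C2]].
  assert (Hw : w1 <> w2) by (intros ->; congruence).
  assert (Y1 : ~ isX w1) by (apply (E_bip H1), Hv).
  assert (Y2 : ~ isX w2) by (apply (E_bip H2), Hv).
  set (d1 := exist (fun u => ~ isX u) w1 Y1). set (d2 := exist (fun u => ~ isX u) w2 Y2).
  exists [d1; d2]. intros h [g [Hg Hh]] Hfix d. apply VY_eq. rewrite Hh.
  assert (G1 : g w1 = w1).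
  { change (g (proj1_sig d1) = proj1_sig d1). rewrite <- Hh, Hfix; simpl; auto. }
  assert (G2 : g w2 = w2).
  { change (g (proj1_sig d2) = proj1_sig d2). rewrite <- Hh, Hfix; simpl; auto. }
  pose proof Hg as [[_ [_ Hedge]] _].
  assert (Gv : g v = v).
  { symmetry. apply (common_neighbour_unique E_sym E_acyclic _ _ Hw (E_sym H1) H2).
    - rewrite <- G1 at 1. exact (proj1 (Hedge _ _) (E_sym H1)).
    - rewrite <- G2 at 1. exact (proj1 (Hedge _ _) H2). }
  exact (U_c_fixes_all Hg SM SN Gv H1 G1 _).
Qed.

Lemma discrete_semi_regular : discrete_perm_group (@box_product X Y V E isX c M N) ->
  semi_regular M /\ semi_regular N.
Proof.
  intros HD. destruct (discrete_U_c HD) as [F HF].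
  split; apply NNPP; intros Hsr;
    destruct (not_semi_regular Hsr) as [m [x0 [x1 [Hm [Hx0 Hx1]]]]].
  - destruct (twist_in_U_c E_sym E_acyclic E_conn E_bip c_legal m F V_inh Y_two
      M_group N_group Hm Hx0 Hx1) as [g [Hg [Hfix [w Hw]]]].
    exact (Hw (HF g Hg Hfix w)).
  - assert (E_bip' : forall u w, E u w -> (~ isX u <-> ~ ~ isX w)).
    { intros u w Huw. apply E_bip in Huw. destruct (classic (isX w)); tauto. }
    destruct (twist_in_U_c E_sym E_acyclic E_conn E_bip' (legal_colouring_swap c_legal)
      m F V_inh X_two N_group M_group Hm Hx0 Hx1) as [g [Hg [Hfix [w Hw]]]].
    apply U_c_swap in Hg. exact (Hw (HF g Hg Hfix w)).
Qed.

End BoxProduct.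

Theorem theorem6p4 (X Y V : Type) (E : V -> V -> Prop) (isX : V -> Prop)
  (c : V -> V -> X + Y) (M : (X -> X) -> Prop) (N : (Y -> Y) -> Prop) :
  (exists x1 x2 : X, x1 <> x2) ->
  (exists y1 y2 : Y, y1 <> y2) ->
  biregular_tree X Y E isX ->
  @legal_colouring X Y V E isX c ->
  perm_group M -> perm_group N ->
  nontrivial_group M -> nontrivial_group N ->
  (discrete_perm_group (@box_product X Y V E isX c M N) <->
   (semi_regular M /\ semi_regular N)).
Proof.
  intros X_two Y_two [[E_sym [_ [V_inh [E_conn E_acyclic]]]] [E_bip _]] c_legal
    M_group N_group _ _.
  split.
  - apply (discrete_semi_regular E_sym E_acyclic E_conn E_bip c_legal V_inh X_two Y_two
      M_group N_group).
  - intros [SM SN]. exact (semi_regular_discrete E_sym E_acyclic E_conn E_bip c_legal V_inh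
      X_two Y_two SM SN).
Qed.
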